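(* Let $N=\{1,\ldots,n\}$, let $(L^+,\le)$ be a totally ordered set with bottom $\mathbb{O}$ and top $\mathbb{1}$ equipped with a conjugation $a\mapsto\overline{a}$, let $\Pi:2^N\to L^+$ be a possibility measure and $\mathrm{N}$ its conjugate necessity measure, $\mathrm{N}(A)=\overline{\Pi(N\setminus A)}$, and suppose the elements of $N$ are labeled so that $\Pi(\{1\})\le\cdots\le\Pi(\{n\})$. Then: (i) $m^\Pi(A)=\Pi(\{i\})$ if $A=\{i\}$ for some $i\in N$, and $m^\Pi(A)=\mathbb{O}$ otherwise; (ii) if $\mathbb{O}<\Pi(\{1\})<\cdots<\Pi(\{n\})=\mathbb{1}$, then $m^{\mathrm{N}}(N)=\mathbb{1}$, $m^{\mathrm{N}}(\{i+1,\ldots,n\})=\overline{\Pi(\{i\})}$ for $i\in N$, and $m^{\mathrm{N}}(A)=\mathbb{O}$ for every other $A\subseteq N$; (iii) if $\Pi(\{i\})=\Pi(\{i+1\})$ for some $i$, then $m^{\mathrm{N}}(\{i+1,\ldots,n\})=\mathbb{O}$.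
   Context: A conjugation on $L^+$ is a bijective order-reversing map $a\mapsto\overline{a}$ with $\overline{\overline{a}}=a$. A capacity is an isotone map $v:(2^N,\subseteq)\to L^+$ with $v(\emptyset)=\mathbb{O}$, $v(N)=\mathbb{1}$. A possibility measure is a capacity $\Pi$ with $\Pi(A\cup B)=\Pi(A)\vee\Pi(B)$ for all $A,B\subseteq N$. For a capacity $v$, its (ordinal) Möbius transform is $m^v(A)=v(A)$ if $v(A)>v(A\setminus\{k\})$ for all $k\in A$, and $m^v(A)=\mathbb{O}$ otherwise (in particular $m^v(\emptyset)=\mathbb{O}$). *)

From HB Require Import structures.
From mathcomp Require Import all_boot all_order.
Set Implicit Arguments. Unset Strict Implicit. Unset Printing Implicit Defensive.
Import Order.TTheory.
Local Open Scope order_scope.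

(* Ground set N = {1,...,n} is represented by 'I_n (element i : 'I_n stands
   for the paper's i+1).  L^+ is a totally ordered set with bottom and top:
   T : tbOrderType d, with \bot = O and \top = 1. *)

Section Defs.
Context {d : Order.disp_t} {T : tbOrderType d} {n : nat}.

Definition conjugation (c : T -> T) : Prop :=
  [/\ bijective c, (forall a b : T, a <= b -> c b <= c a) & involutive c].

Definition capacity (v : {set 'I_n} -> T) : Prop :=
  [/\ (forall A B : {set 'I_n}, A \subset B -> v A <= v B),
      v set0 = \bot & v setT = \top].

Definition possibility (P : {set 'I_n} -> T) : Prop :=
  capacity P /\ (forall A B : {set 'I_n}, P (A :|: B) = P A `|` P B).

Definition necessity (c : T -> T) (P : {set 'I_n} -> T) (A : {set 'I_n}) : T :=
  c (P (~: A)).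

Definition moebius (v : {set 'I_n} -> T) (A : {set 'I_n}) : T :=
  if (A != set0) && [forall k in A, v (A :\ k) < v A] then v A else \bot.
End Defs.

From HB Require Import structures.
From mathcomp Require Import all_boot all_order.
Import Order.TTheory.
Local Open Scope order_scope.

(* A possibility measure is the join of its values on singletons, so it is
   blind to every point below the maximum: removing from A a point that is not
   strictly the largest leaves Pi(A) unchanged.  Hence only singletons carry
   Moebius mass for Pi.  For the necessity measure, removing k from A changes
   N(A) exactly when Pi([set k]) > Pi(~: A), so A carries mass only if every
   point of A lies strictly above every point of its complement; with the
   labeling, such an A is an upper set [set j | i < j], whose complement has
   possibility Pi([set i]). *)

Section Conjugation.
Context {d : Order.disp_t} {T : tbOrderType d} {c : T -> T}.
Hypothesis hc : conjugation c.

Lemma conjugation_lt (x y : T) : (c x < c y) = (y < x).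
Proof.
have [_ anti cK] := hc; have c_inj := can_inj cK.
rewrite !lt_neqAle (inj_eq c_inj) [x == y]eq_sym; case: eqP => //= _.
by apply/idP/idP => [|/anti //]; rewrite -[y]cK -[x]cK => /anti; rewrite !cK.
Qed.

Lemma conjugation_bot : c \bot = \top.
Proof.
have [_ anti cK] := hc; apply/eqP; rewrite eq_le lex1 /=.
by rewrite -{1}[\top]cK; apply/anti/le0x.
Qed.

Lemma conjugation_top : c \top = \bot.
Proof.
have [_ anti cK] := hc; apply/eqP; rewrite eq_le le0x andbT.
by rewrite -{1}[\bot]cK; apply/anti/lex1.
Qed.

End Conjugation.

Section Possibility.
Context {d : Order.disp_t} {T : tbOrderType d} {n : nat} {P : {set 'I_n} -> T}.
Hypothesis hP : possibility P.

Lemma possibility_set0 : P set0 = \bot. Proof. by case: hP => -[]. Qed.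
Lemma possibility_setT : P setT = \top. Proof. by case: hP => -[]. Qed.

Lemma possibility_setU (A B : {set 'I_n}) : P (A :|: B) = P A `|` P B.
Proof. by case: hP. Qed.

Lemma possibility_joins (A : {set 'I_n}) : P A = \join_(j in A) P [set j].
Proof.
rewrite -(big_morph P possibility_setU possibility_set0); congr P.
apply/setP => x; apply/idP/bigcupP => [xA | [j jA /set1P -> //]].
by exists x; rewrite ?set11.
Qed.

Lemma possibility_set1_le {A : {set 'I_n}} {j : 'I_n} : j \in A -> P [set j] <= P A.
Proof. by move=> jA; case: hP => -[mono _ _] _; apply: mono; rewrite sub1set. Qed.

Lemma possibility_le (A : {set 'I_n}) (x : T) :
  (forall j, j \in A -> P [set j] <= x) -> P A <= x.
Proof. by rewrite possibility_joins; apply: joins_le. Qed.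

Lemma possibility_setD1 {A : {set 'I_n}} {j k : 'I_n} :
  k \in A -> j \in A :\ k -> P [set k] <= P [set j] -> P (A :\ k) = P A.
Proof.
move=> kA jAk kj; rewrite -[in RHS](setD1K kA) possibility_setU join_r //.
exact: le_trans kj (possibility_set1_le jAk).
Qed.

Lemma moebius_possibility_set1 (i : 'I_n) : moebius P [set i] = P [set i].
Proof.
rewrite /moebius; case: ifP => // /negbT; rewrite negb_and negbK.
case/orP => [/eqP/setP/(_ i) | ]; first by rewrite !inE eqxx.
rewrite negb_forall_in => /existsP[k /andP[/set1P -> ]].
by rewrite setDv possibility_set0 -leNgt => h; apply/le_anti; rewrite le0x h.
Qed.

Lemma moebius_possibility_eq0 (A : {set 'I_n}) :
  (forall i, A != [set i]) -> moebius P A = \bot.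
Proof.
move=> notA1; rewrite /moebius; case: ifP => // /andP[/set0Pn[j jA] /forall_inP strict].
have [k /andP[kA kj]] : exists k, (k \in A) && (k != j).
  apply/existsP; apply: contraR (notA1 j) => /existsPn others.
  apply/eqP/setP => x; rewrite inE; apply/idP/eqP => [xA | -> //].
  by apply/eqP; move: (others x); rewrite xA /= negbK.
have [kj_le | jk_le] := leP (P [set k]) (P [set j]).
- have := strict k kA; rewrite (possibility_setD1 kA _ kj_le) ?ltxx //.
  by rewrite in_setD1 eq_sym kj.
- have := strict j jA; rewrite (possibility_setD1 jA _ (ltW jk_le)) ?ltxx //.
  by rewrite in_setD1 kj.
Qed.

Context {c : T -> T}.
Hypothesis hc : conjugation c.

Lemma moebius_necessity (A : {set 'I_n}) :
  moebius (necessity c P) A =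
  if (A != set0) && [forall k in A, P (~: A) < P [set k]] then c (P (~: A))
  else \bot.
Proof.
rewrite /moebius /necessity; congr (if _ && _ then _ else _).
apply: eq_forallb => k; case: (k \in A) => //=.
have -> : ~: (A :\ k) = ~: A :|: [set k].
  by apply/setP => x; rewrite !inE negb_and negbK orbC; case: eqP => // ->.
by rewrite conjugation_lt // possibility_setU ltxU ltxx.
Qed.

Lemma moebius_necessity_setT :
  (forall i, \bot < P [set i]) -> moebius (necessity c P) setT = \top.
Proof.
move=> P1_gt0; rewrite moebius_necessity setCT possibility_set0.
case: ifP => [_ | /negbT]; first exact: conjugation_bot.
rewrite negb_and negbK => /orP[/eqP T0 | ].
  by rewrite -possibility_setT -possibility_set0 T0.
by rewrite negb_forall_in => /existsP[k /andP[_]]; rewrite P1_gt0.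
Qed.

End Possibility.

Section Labeled.
Context {d : Order.disp_t} {T : tbOrderType d} {n : nat} {P : {set 'I_n} -> T}.
Hypothesis hP : possibility P.
Hypothesis P1_mono : forall i j : 'I_n, (i <= j)%N -> P [set i] <= P [set j].
Context {c : T -> T}.
Hypothesis hc : conjugation c.

Lemma possibility_setC_upper (i : 'I_n) :
  P (~: [set j : 'I_n | (i < j)%N]) = P [set i].
Proof.
apply/le_anti; rewrite (possibility_set1_le hP) ?inE ?ltnn // andbT.
by apply: (possibility_le hP) => j; rewrite !inE -leqNgt => /P1_mono.
Qed.

Lemma moebius_necessity_upper_eq0 (i k : 'I_n) :
  (i < k)%N -> P [set k] <= P [set i] ->
  moebius (necessity c P) [set j : 'I_n | (i < j)%N] = \bot.
Proof.
move=> ik Pki; rewrite moebius_necessity // possibility_setC_upper.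
case: ifP => // /andP[_ /forall_inP/(_ k)]; rewrite inE ik => /(_ isT).
by rewrite ltNge Pki.
Qed.

Lemma moebius_necessity_upper (i : 'I_n) :
  (forall k : 'I_n, (i < k)%N -> P [set i] < P [set k]) ->
  (i.+1 = n -> P [set i] = \top) ->
  moebius (necessity c P) [set j : 'I_n | (i < j)%N] = c (P [set i]).
Proof.
move=> P1_lt last_top; rewrite moebius_necessity // possibility_setC_upper.
case: ifP => // /negbT; rewrite negb_and negbK => /orP[/eqP up0 | ].
  have i_last : i.+1 = n.
    apply/eqP; rewrite eqn_leq ltn_ord leqNgt /=; apply/negP => lt_in.
    have : Ordinal lt_in \in [set j : 'I_n | (i < j)%N] by rewrite inE.
    by rewrite up0 inE.
  by rewrite last_top // conjugation_top.
by rewrite negb_forall_in => /existsP[k /andP[]]; rewrite inE => /P1_lt ->.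
Qed.

Lemma upper_of_setC_lt {A : {set 'I_n}} :
  A != setT -> (forall k, k \in A -> P (~: A) < P [set k]) ->
  exists i : 'I_n, A = [set j : 'I_n | (i < j)%N].
Proof.
move=> AT AC_lt; have [j0 j0C] : exists j, j \in ~: A.
  by apply/set0Pn; apply: contra AT => /eqP AC0; rewrite -[A]setCK AC0 setC0.
have below k j : k \in A -> j \in ~: A -> (j < k)%N.
  move=> kA jC; rewrite ltnNge; apply/negP => /P1_mono Pkj.
  by have := AC_lt k kA; rewrite ltNge (le_trans Pkj (possibility_set1_le hP jC)).
have [i iC imax] := @arg_maxnP _ j0 (mem (~: A)) val j0C.
exists i; apply/setP => x; rewrite inE.
have [xA | xA] := boolP (x \in A); first by rewrite below.
have xC : x \in ~: A by rewrite inE.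
by symmetry; apply/negbTE; rewrite -leqNgt; apply: imax xC.
Qed.

Lemma moebius_necessity_eq0 (A : {set 'I_n}) :
  A != setT -> (forall i : 'I_n, A != [set j : 'I_n | (i < j)%N]) ->
  moebius (necessity c P) A = \bot.
Proof.
move=> AT not_upper; rewrite moebius_necessity //.
case: ifP => // /andP[_ /forall_inP/(upper_of_setC_lt AT)[i Ai]].
by move: (not_upper i); rewrite Ai eqxx.
Qed.

End Labeled.

Theorem theorem3 (d : Order.disp_t) (T : tbOrderType d) (n : nat)
    (c : T -> T) (P : {set 'I_n} -> T) :
  conjugation c ->
  possibility P ->
  (forall i j : 'I_n, (i <= j)%N -> P [set i] <= P [set j]) ->
  (* (i) *)
  ((forall i : 'I_n, moebius P [set i] = P [set i]) /\
   (forall A : {set 'I_n}, (forall i : 'I_n, A != [set i]) -> moebius P A = \bot))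
  /\
  (* (ii) *)
  ((forall i : 'I_n, \bot < P [set i]) ->
   (forall i j : 'I_n, (i < j)%N -> P [set i] < P [set j]) ->
   (forall i : 'I_n, i.+1 = n -> P [set i] = \top) ->
   [/\ moebius (necessity c P) setT = \top,
       (forall i : 'I_n,
          moebius (necessity c P) [set j : 'I_n | (i < j)%N] = c (P [set i]))
     & (forall A : {set 'I_n}, A != setT ->
          (forall i : 'I_n, A != [set j : 'I_n | (i < j)%N]) ->
          moebius (necessity c P) A = \bot)])
  /\
  (* (iii) *)
  (forall i i' : 'I_n, val i' = i.+1 -> P [set i] = P [set i'] ->
     moebius (necessity c P) [set j : 'I_n | (i < j)%N] = \bot).
Proof.
move=> hc hP P1_mono; split; [split | split].
- exact: moebius_possibility_set1.
- exact: moebius_possibility_eq0.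
- move=> P1_gt0 P1_lt last_top; split.
  + exact: moebius_necessity_setT.
  + move=> i; apply: (moebius_necessity_upper hP P1_mono hc) => [k|];
      [exact: P1_lt | exact: last_top].
  + exact: moebius_necessity_eq0.
- move=> i i' i'E Pii'.
  by apply: (moebius_necessity_upper_eq0 hP P1_mono hc i i'); rewrite ?i'E ?Pii'.
Qed.
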